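(* Let $p$ be an indecomposable permutation of $[n]$ avoiding $3241$ and $4321$ that contains $321$, with associated triple $(a,b,c)$. Then: (i) if $c$ is finite, all entries to the right of $a$ in $p$ are $\ge c$; (ii) if $c=\infty$, or if $c$ is finite and $c>b+1$, then $b+1$ lies to the left of $b$ in $p$; (iii) if $c=\infty$, then $a$ is the last entry of $p$; (iv) if $z>b$ is an entry of $p$, and in case $c$ is finite $z$ lies to the left of $c$ in $p$, then $z$ is a left-to-right maximum of $p$.
   Context: Permutations are in one-line notation; pattern containment/avoidance is classical. Indecomposable: no $k$, $1\le k\le n-1$, with $\{p_1,\dots,p_k\}=\{1,\dots,k\}$. An entry is a left-to-right maximum (LRMax) if it exceeds all entries to its left. The associated triple $(a,b,c)$ of a $321$-containing permutation: $a$ is the rightmost entry that plays the role of ''1'' in some occurrence of $321$; $b$ is the rightmost entry to the left of $a$ that exceeds $a$; $c$ is the first entry to the right of $a$ that is not a LRMax, with $c=\infty$ if no such entry exists. *)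

From mathcomp Require Import all_boot.
Set Implicit Arguments. Unset Strict Implicit. Unset Printing Implicit Defensive.

(* Permutations of [n] in one-line notation: a sequence p = p_1 ... p_n
   (stored 0-indexed: position i holds nth 0 p i) that is a rearrangement
   of 1, 2, ..., n. *)
Definition is_perm (n : nat) (p : seq nat) : Prop := perm_eq p (iota 1 n).

Definition contains (p q : seq nat) : Prop :=
  exists s : seq nat,
    [/\ size s = size q, sorted ltn s, all (fun i => i < size p) s &
        forall x y, x < size q -> y < size q ->
          (nth 0 p (nth 0 s x) < nth 0 p (nth 0 s y)) = (nth 0 q x < nth 0 q y)].

Definition avoids (p q : seq nat) : Prop := ~ contains p q.

Definition indecomposable (p : seq nat) : Prop :=
  forall k, 1 <= k -> k <= (size p).-1 -> ~ perm_eq (take k p) (iota 1 k).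

Definition LRMax (p : seq nat) (i : nat) : Prop :=
  i < size p /\ forall j, j < i -> nth 0 p j < nth 0 p i.

Definition role1_of_321 (p : seq nat) (i : nat) : Prop :=
  i < size p /\
  exists j k, [/\ j < k, k < i & nth 0 p i < nth 0 p k < nth 0 p j].

Definition is_a_pos (p : seq nat) (ia : nat) : Prop :=
  role1_of_321 p ia /\ forall i, role1_of_321 p i -> i <= ia.

Definition is_b_pos (p : seq nat) (ia ib : nat) : Prop :=
  [/\ ib < ia, nth 0 p ia < nth 0 p ib &
      forall j, j < ia -> nth 0 p ia < nth 0 p j -> j <= ib].

(* oc is the position of c: the first entry right of a that is not a LRMax;
   None encodes c = infinity (no such entry). *)
Definition is_c_pos (p : seq nat) (ia : nat) (oc : option nat) : Prop :=
  match oc with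
  | Some ic => [/\ ia < ic, ic < size p, ~ LRMax p ic &
                  forall j, ia < j -> j < ic -> LRMax p j]
  | None => forall j, ia < j -> j < size p -> LRMax p j
  end.

From mathcomp Require Import all_boot.
From mathcomp Require Import zify.

Set Implicit Arguments.
Unset Strict Implicit.
Unset Printing Implicit Defensive.

(* Everything comes from the extremal choices in the triple and from
   indecomposability.  An entry right of a that is smaller than some earlier
   entry would be a later "1" of a 321, and an entry strictly between b and a
   exceeding a would contradict the choice of b.  An entry right of a below c,
   or any entry after a when c is infinite, would give a position before which
   all entries are smaller than all entries after it, i.e. a decomposition.
   An entry above b left of b that is not a left-to-right maximum completes a
   4321 with b and a.  Finally b < n, since otherwise the 321 ending at a
   would extend to a 3241; so b + 1 occurs, and the arguments above leave it
   no room right of b. *)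

Section Permutations.

Variables (n : nat) (p : seq nat).
Hypothesis p_perm : is_perm n p.

Lemma is_perm_uniq : uniq p.
Proof. by rewrite (perm_uniq p_perm) iota_uniq. Qed.

Lemma is_perm_mem x : (x \in p) = (0 < x <= n).
Proof. by rewrite (perm_mem p_perm) mem_iota add1n ltnS. Qed.

Lemma is_perm_nth_le i : i < size p -> nth 0 p i <= n.
Proof. by move/(mem_nth 0); rewrite is_perm_mem => /andP[]. Qed.

Lemma is_perm_nth_inj i j :
  i < size p -> j < size p -> nth 0 p i = nth 0 p j -> i = j.
Proof. by move=> ip jp /eqP; rewrite nth_uniq ?is_perm_uniq // => /eqP. Qed.

Lemma perm_eq_take_iota k :
  k <= size p ->
  (forall i j, i < k -> k <= j -> j < size p -> nth 0 p i < nth 0 p j) ->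
  perm_eq (take k p) (iota 1 k).
Proof.
move=> kp split_k.
have size_take_k : size (take k p) = k by rewrite size_takel.
have take_uniq_k : uniq (take k p) by rewrite take_uniq ?is_perm_uniq.
have take_sub : {subset take k p <= iota 1 k}.
  move=> x xk; have xp := mem_take xk.
  have /andP[x_gt0 x_le_n] : 0 < x <= n by rewrite -is_perm_mem.
  rewrite mem_iota add1n ltnS x_gt0 /= leqNgt; apply/negP => k_lt_x.
  have ix : index x p < k by rewrite -in_take.
  suff : size (x :: iota 1 k) <= size (take k p) by rewrite /= size_iota size_take_k ltnn.
  apply: uniq_leq_size; first by rewrite /= iota_uniq andbT mem_iota; lia.
  move=> y; rewrite inE => /predU1P[-> // | ]; rewrite mem_iota => /andP[y_gt0 y_le].
  have yp : y \in p by rewrite is_perm_mem y_gt0 /=; lia.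
  rewrite in_take // ltnNge; apply/negP => iy.
  have := split_k _ _ ix iy; rewrite index_mem yp !nth_index // => /(_ isT); lia.
have [_ take_eq] := uniq_min_size take_uniq_k take_sub
  ltac:(by rewrite size_iota size_take_k).
exact: uniq_perm take_uniq_k (iota_uniq _ _) take_eq.
Qed.

Lemma indecomposable_no_split k :
  indecomposable p -> 0 < k < size p ->
  ~ (forall i j, i < k -> k <= j -> j < size p -> nth 0 p i < nth 0 p j).
Proof.
move=> p_indec /andP[k_gt0 k_lt] split_k.
by apply: (p_indec k k_gt0); [lia | apply: perm_eq_take_iota => //; lia].
Qed.

End Permutations.

Lemma not_LRMax_witness p i :
  uniq p -> i < size p -> ~ LRMax p i -> exists2 j, j < i & nth 0 p i < nth 0 p j.
Proof.
move=> p_uniq ip not_max.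
have [/allP all_lt | /allPn[j]] :=
  boolP (all (fun j => nth 0 p j < nth 0 p i) (iota 0 i)).
  by case: not_max; split => // j ji; apply: all_lt; rewrite mem_iota.
rewrite mem_iota add0n => /andP[_ ji]; rewrite -leqNgt leq_eqVlt.
case/predU1P=> [eq_ji | ]; last by exists j.
by move/eqP: eq_ji; rewrite nth_uniq ?(ltn_trans ji) //; lia.
Qed.

Lemma contains_4321 p i1 i2 i3 i4 :
  i1 < i2 -> i2 < i3 -> i3 < i4 -> i4 < size p ->
  nth 0 p i4 < nth 0 p i3 -> nth 0 p i3 < nth 0 p i2 -> nth 0 p i2 < nth 0 p i1 ->
  contains p [:: 4; 3; 2; 1].
Proof.
move=> h12 h23 h34 h4 v43 v32 v21; exists [:: i1; i2; i3; i4]; split => //=.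
- by rewrite h12 h23 h34.
- by rewrite h4; apply/and4P; split; lia.
- by case=> [|[|[|[|x]]]] // [|[|[|[|y]]]] //= _ _; lia.
Qed.

Lemma contains_3241 p i1 i2 i3 i4 :
  i1 < i2 -> i2 < i3 -> i3 < i4 -> i4 < size p ->
  nth 0 p i4 < nth 0 p i2 -> nth 0 p i2 < nth 0 p i1 -> nth 0 p i1 < nth 0 p i3 ->
  contains p [:: 3; 2; 4; 1].
Proof.
move=> h12 h23 h34 h4 v42 v21 v13; exists [:: i1; i2; i3; i4]; split => //=.
- by rewrite h12 h23 h34.
- by rewrite h4; apply/and4P; split; lia.
- by case=> [|[|[|[|x]]]] // [|[|[|[|y]]]] //= _ _; lia.
Qed.

Section AssociatedTriple.

Variables (n : nat) (p : seq nat) (ia ib : nat) (oc : option nat).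
Hypotheses (p_perm : is_perm n p) (p_indec : indecomposable p).
Hypotheses (p_av3241 : avoids p [:: 3; 2; 4; 1]) (p_av4321 : avoids p [:: 4; 3; 2; 1]).
Hypotheses (a_pos : is_a_pos p ia) (b_pos : is_b_pos p ia ib) (c_pos : is_c_pos p ia oc).

Lemma a_pos_lt_size : ia < size p.
Proof. by case: a_pos => -[]. Qed.

Lemma no_role1_right_of_a l : ia < l -> ~ role1_of_321 p l.
Proof. by case: a_pos => _ a_max a_l /a_max; lia. Qed.

Lemma c_le_right_of_c ic :
  oc = Some ic -> forall l, ic < l -> l < size p -> nth 0 p ic <= nth 0 p l.
Proof.
move=> oc_ic l ic_l lp; move: c_pos; rewrite oc_ic => -[a_ic icp c_notmax _].
have [i i_ic c_lt] := not_LRMax_witness (is_perm_uniq p_perm) icp c_notmax.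
rewrite leqNgt; apply/negP => l_lt_c; apply: (@no_role1_right_of_a l); first lia.
by split => //; exists i, ic; rewrite l_lt_c c_lt.
Qed.

Lemma c_le_right_of_a ic :
  oc = Some ic -> forall j, ia < j -> j < size p -> nth 0 p ic <= nth 0 p j.
Proof.
move=> oc_ic j a_j jp; have c_le_after := c_le_right_of_c oc_ic.
move: c_pos; rewrite oc_ic => -[a_ic icp _ between_max].
have [j_ic | ic_j | -> //] := ltngtP j ic; last exact: c_le_after.
rewrite leqNgt; apply/negP => j_lt_c.
have [_ j_max] := between_max j a_j j_ic.
(* Every entry up to j is at most p_j, every later one exceeds it. *)
apply: (indecomposable_no_split p_perm (k := j.+1)) => //; first lia.
move=> i l i_j j_l lp.
have i_le_j : nth 0 p i <= nth 0 p j.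
  by have [/j_max/ltnW | | ->] := ltngtP i j; [| lia |].
have [l_ic | ic_l | ->] := ltngtP l ic; last lia.
- by have [_ l_max] := between_max l ltac:(lia) l_ic; have := l_max j ltac:(lia); lia.
- by have := c_le_after l ic_l lp; lia.
Qed.

Lemma a_last_of_c_infinite : oc = None -> ia = (size p).-1.
Proof.
move=> oc_none; move: c_pos; rewrite oc_none => after_max.
have iap := a_pos_lt_size.
have [a_lt | | //] := ltngtP ia (size p).-1; last lia.
case: (indecomposable_no_split p_perm (k := ia.+1)) => //; first lia.
by move=> i l i_a a_l lp; have [_ l_max] := after_max l a_l lp; apply: l_max; lia.
Qed.

Lemma b_lt_n : nth 0 p ib < n.
Proof.
have [[iap [j0 [k0 [j0_k0 k0_a /andP[a_lt_k0 k0_lt_j0]]]]] _] := a_pos.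
have [b_a a_lt_b b_max] := b_pos.
have k0_b : k0 <= ib by apply: b_max; lia.
rewrite ltnNge; apply/negP => n_le_b.
have j0_le_n := is_perm_nth_le p_perm (i := j0) ltac:(lia).
have [k0_lt_b | | k0_b'] := ltngtP k0 ib; [| lia | by move: k0_lt_j0; rewrite k0_b'; lia].
have j0_ne_b : nth 0 p j0 <> nth 0 p ib.
  by move/(is_perm_nth_inj p_perm); lia.
by apply: p_av3241; apply: (contains_3241 j0_k0 k0_lt_b b_a) => //; lia.
Qed.

Lemma succ_b_left_of_b :
  (oc = None \/ exists ic, oc = Some ic /\ (nth 0 p ib).+1 < nth 0 p ic) ->
  index (nth 0 p ib).+1 p < index (nth 0 p ib) p.
Proof.
move=> c_big; set b := nth 0 p ib.
have iap := a_pos_lt_size; have [b_a a_lt_b b_max] := b_pos.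
have b1p : b.+1 \in p by rewrite (is_perm_mem p_perm); have := b_lt_n; rewrite -/b; lia.
set q := index b.+1 p.
have qp : q < size p by rewrite index_mem.
have p_q : nth 0 p q = b.+1 by rewrite nth_index.
have -> : index b p = ib by rewrite index_uniq ?(is_perm_uniq p_perm) ?(ltn_trans b_a).
rewrite ltnNge; apply/negP => b_le_q.
have [| b_q | q_b] := ltngtP q ib; [lia | | by move: p_q; rewrite q_b; lia].
have [q_a | a_q | q_a] := ltngtP q ia; last by move: p_q; rewrite q_a; lia.
- by have := b_max q q_a ltac:(lia); lia.
- case: c_big => [/a_last_of_c_infinite | [ic [oc_ic b1_lt_c]]]; first lia.
  by have := c_le_right_of_a oc_ic a_q qp; lia.
Qed.

Lemma LRMax_of_gt_b jz :
  jz < size p -> nth 0 p ib < nth 0 p jz ->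
  (forall ic, oc = Some ic -> jz < ic) -> LRMax p jz.
Proof.
move=> jzp b_lt_z left_of_c; have iap := a_pos_lt_size.
have [b_a a_lt_b b_max] := b_pos.
have [z_a | a_z | z_a] := ltngtP jz ia; last by move: b_lt_z; rewrite z_a; lia.
- have [z_b | b_z | z_b] := ltngtP jz ib; last by move: b_lt_z; rewrite z_b; lia.
    split => // j j_z; rewrite ltnNge; apply/negP => z_le_j; apply: p_av4321.
    have z_ne_j : nth 0 p j <> nth 0 p jz by move/(is_perm_nth_inj p_perm); lia.
    by apply: (contains_4321 j_z z_b b_a); lia.
  by have := b_max jz z_a ltac:(lia); lia.
- move: c_pos left_of_c; case: oc => [ic [_ _ _ between_max] | after_max] left_of_c.
    exact: between_max jz a_z (left_of_c ic erefl).
  exact: after_max jz a_z jzp.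
Qed.

End AssociatedTriple.

Theorem lemma7 (n : nat) (p : seq nat) :
  is_perm n p -> indecomposable p ->
  avoids p [:: 3; 2; 4; 1] -> avoids p [:: 4; 3; 2; 1] ->
  contains p [:: 3; 2; 1] ->
  forall (ia ib : nat) (oc : option nat),
    is_a_pos p ia -> is_b_pos p ia ib -> is_c_pos p ia oc ->
    let b := nth 0 p ib in
    (* (i) *)
    (forall ic, oc = Some ic ->
       forall j, ia < j -> j < size p -> nth 0 p ic <= nth 0 p j) /\
    (* (ii) *)
    ((oc = None \/ exists ic, oc = Some ic /\ b.+1 < nth 0 p ic) ->
       index b.+1 p < index b p) /\
    (* (iii) *)
    (oc = None -> ia = (size p).-1) /\
    (* (iv) *)
    (forall jz, jz < size p -> b < nth 0 p jz ->
       (forall ic, oc = Some ic -> jz < ic) -> LRMax p jz).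
Proof.
move=> p_perm p_indec p_av3241 p_av4321 _ ia ib oc a_pos b_pos c_pos b.
split; first exact: c_le_right_of_a p_perm p_indec a_pos c_pos.
split; first exact: succ_b_left_of_b p_perm p_indec p_av3241 a_pos b_pos c_pos.
split; first exact: a_last_of_c_infinite p_perm p_indec a_pos c_pos.
exact: LRMax_of_gt_b p_perm p_av4321 a_pos b_pos c_pos.
Qed.
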